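(* Let $\alpha>0$, $\sigma>0$, $X_\natural(s,t) = \mathbf{1}\{|s|\le\alpha,|t|\le\alpha\}$, and $$\mathcal{C}(\mathbf{x}) = \Big\langle\nabla_{\mathbf{x}}[\varphi^{(2)}_{\sigma^2}\ast X_\natural](\mathbf{x}),\ \begin{bmatrix}0&-1\\1&0\end{bmatrix}\mathbf{x}\Big\rangle_{\ell^2},\qquad\mathbf{x}\in\mathbb{R}^2.$$ Let $\mathbf{Q}$ be one of the matrices $\begin{bmatrix}1&0\\0&-1\end{bmatrix},\begin{bmatrix}-1&0\\0&1\end{bmatrix},\begin{bmatrix}0&1\\1&0\end{bmatrix},\begin{bmatrix}0&-1\\-1&0\end{bmatrix}$ (the symmetries of the square of determinant $-1$). Then $\mathcal{C}(\mathbf{Q}\mathbf{x}) = -\mathcal{C}(\mathbf{x})$ for all $\mathbf{x}\in\mathbb{R}^2$.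
   Context: $\varphi^{(2)}_{\sigma^2}(\mathbf{x}) = (2\pi\sigma^2)^{-1}e^{-\|\mathbf{x}\|_2^2/(2\sigma^2)}$ and $\ast$ is convolution on $\mathbb{R}^2$. *)

From HB Require Import structures.
From mathcomp Require Import all_boot all_order all_algebra.
From mathcomp Require Import all_classical all_reals all_analysis.
Set Implicit Arguments. Unset Strict Implicit. Unset Printing Implicit Defensive.
Import Order.TTheory GRing.Theory Num.Theory.
Local Open Scope ring_scope.
Local Open Scope classical_set_scope.

Section Defs.
Variable R : realType.

Definition leb2 : set (R * R) -> \bar R :=
  ((@lebesgue_measure R) \x (@lebesgue_measure R))%E.

Definition mx2 (a b c d : R) : 'M[R]_2 :=
  \matrix_(i < 2, j < 2)
    if i == 0 then (if j == 0 then a else b) else (if j == 0 then c else d).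

Definition mxapp (Q : 'M[R]_2) (x : R * R) : R * R :=
  (Q 0 0 * x.1 + Q 0 1 * x.2, Q 1 0 * x.1 + Q 1 1 * x.2).

Definition dot2 (x y : R * R) : R := x.1 * y.1 + x.2 * y.2.

Definition gauss2 (s2 : R) (x : R * R) : R :=
  (2 * pi * s2)^-1 * expR (- (x.1 ^+ 2 + x.2 ^+ 2) / (2 * s2)).

Definition conv2 (f g : R * R -> R) (x : R * R) : R :=
  Rintegral leb2 setT (fun y => f (x.1 - y.1, x.2 - y.2) * g y).

Definition Xsq (alpha : R) (x : R * R) : R :=
  if (`|x.1| <= alpha) && (`|x.2| <= alpha) then 1 else 0.

Definition grad2 (F : R * R -> R) (x : R * R) : R * R :=
  ((fun s => F (s, x.2))^`() x.1, (fun t => F (x.1, t))^`() x.2).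

Definition Cfun (alpha sigma : R) (x : R * R) : R :=
  dot2 (grad2 (conv2 (gauss2 (sigma ^+ 2)) (Xsq alpha)) x)
       (mxapp (mx2 0 (-1) 1 0) x).

End Defs.

(* The Gaussian and the indicator of the square are both invariant under the
   reflections (u, v) |-> (-u, v), (u, v) |-> (u, -v) and the swap
   (u, v) |-> (v, u), which generate the symmetry group of the square. These
   maps are additive and preserve Lebesgue measure on R^2 (by Tonelli and the
   reflection invariance of Lebesgue measure on R), so the convolution
   F = phi * X inherits their invariance. Differentiating F (L x) = F x gives
   grad F (L x) = L (grad F x); since each L is orthogonal with determinant -1
   it conjugates the rotation J to -J, whence C (L x) = - C x. The four
   matrices of the statement are three of these maps and the composite of all
   three. *)
From mathcomp Require Import all_boot all_order all_algebra.
From mathcomp Require Import all_classical all_reals all_analysis measurable_realfun.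
From mathcomp Require Import ring.
Set Implicit Arguments. Unset Strict Implicit. Unset Printing Implicit Defensive.
Import GRing.Theory Num.Theory.
Local Open Scope ring_scope.
Local Open Scope classical_set_scope.

Definition reflect1 {U V : zmodType} (x : U * V) : U * V := (- x.1, x.2).
Definition reflect2 {U V : zmodType} (x : U * V) : U * V := (x.1, - x.2).
Definition swap_pair {U V : Type} (x : U * V) : V * U := (x.2, x.1).

Section derive1_reflection.
Variable R : realType.

Lemma dnbhs0_oppr : (-%R @ (0 : R^o)^') = (0 : R^o)^'.
Proof.
apply/seteqP; split => A [e e0 eA]; exists e => // y /= ye y0.
- rewrite -[y]opprK; apply: eA;
    by rewrite /= ?sub0r ?opprK ?normrN ?oppr_eq0 // -normrN -sub0r.
- by apply: eA; rewrite /= ?sub0r ?normrN ?oppr_eq0 // -normrN -sub0r.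
Qed.

(* No differentiability is assumed: where the difference quotient diverges,
   both sides are the junk limit 0. *)
Lemma derive1_comp_oppr (f : R -> R) t :
  derive1 (f \o -%R) t = - derive1 f (- t).
Proof.
rewrite /derive1 /=; set q := fun h => h^-1 *: (f (h - t) - f (- t)).
have -> : (fun h => h^-1 *: (f (- (h + t)) - f (- t))) = (- q) \o -%R.
  by apply/funext => h; rewrite /q /= !fctE invrN scaleNr opprK opprD.
have -> : ((- q) \o -%R) @ 0^' = (- q) @ 0^' by rewrite fmap_comp dnbhs0_oppr.
have [cq|ncq] := pselect (cvg (q @ 0^')); first by rewrite limN.
have ncNq : ~ cvg ((- q) @ 0^') by rewrite is_cvgNE.
by rewrite (dvgP ncq) (dvgP ncNq) oppr0.
Qed.

Lemma derive1_even (f : R -> R) t :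
  (forall s, f (- s) = f s) -> derive1 f (- t) = - derive1 f t.
Proof.
move=> fE; have := derive1_comp_oppr f t.
by rewrite (_ : f \o -%R = f) => [->|]; [rewrite opprK | apply/funext].
Qed.

End derive1_reflection.

Section leb2_invariance.
Variable R : realType.
Local Notation mu := (@lebesgue_measure R).
Let M := measurableTypeR R.
Let T2 := (M * M)%type.
Local Notation lam2 := (@leb2 R : set T2 -> \bar R).
Local Open Scope ereal_scope.

Definition leb2_invariant (L : T2 -> T2) := forall h : T2 -> \bar R,
  measurable_fun [set: T2] h -> \int[lam2]_y h (L y) = \int[lam2]_y h y.

Lemma ge0_integral_comp_oppr (f : M -> \bar R) :
  measurable_fun setT f -> (forall r, 0 <= f r) ->
  \int[mu]_r f (- r)%R = \int[mu]_r f r.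
Proof.
move=> mf f0; rewrite -[LHS]/(\int[mu]_r (f \o -%R) r).
rewrite -(@preimage_setT _ _ (-%R : M -> M)) -ge0_integral_pushforward //.
by apply: eq_measure_integral => //= A mA _; rewrite lebesgue_measureN.
Qed.

Lemma ge0_leb2_integral_swap (h : T2 -> \bar R) :
  measurable_fun [set: T2] h -> (forall y, 0 <= h y) ->
  \int[lam2]_y h (swap_pair y) = \int[lam2]_y h y.
Proof.
move=> mh h0; have mhs : measurable_fun [set: T2] (fun y => h (swap_pair y)).
  apply: measurableT_comp mh _; apply: measurable_fun_pair.
    exact: measurable_snd.
  exact: measurable_fst.
by rewrite /leb2 (fubini_tonelli1 _ mhs) //= (fubini_tonelli2 _ mh).
Qed.

Lemma ge0_leb2_integral_reflect1 (h : T2 -> \bar R) :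
  measurable_fun [set: T2] h -> (forall y, 0 <= h y) ->
  \int[lam2]_y h (reflect1 y) = \int[lam2]_y h y.
Proof.
move=> mh h0; have mhr : measurable_fun [set: T2] (fun y => h (reflect1 y)).
  apply: measurableT_comp mh _; apply: measurable_fun_pair.
    by apply: measurable_funN; exact: measurable_fst.
  exact: measurable_snd.
rewrite /leb2 (fubini_tonelli2 _ mhr) //= (fubini_tonelli2 _ mh) //.
apply: eq_integral => v _; apply: (@ge0_integral_comp_oppr (fun u => h (u, v))) => //.
exact: measurable_fun_pair1.
Qed.

Lemma ge0_leb2_integral_reflect2 (h : T2 -> \bar R) :
  measurable_fun [set: T2] h -> (forall y, 0 <= h y) ->
  \int[lam2]_y h (reflect2 y) = \int[lam2]_y h y.
Proof.
move=> mh h0; have mhr : measurable_fun [set: T2] (fun y => h (reflect2 y)).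
  apply: measurableT_comp mh _; apply: measurable_fun_pair.
    exact: measurable_fst.
  by apply: measurable_funN; exact: measurable_snd.
rewrite /leb2 (fubini_tonelli1 _ mhr) //= (fubini_tonelli1 _ mh) //.
apply: eq_integral => u _; apply: (@ge0_integral_comp_oppr (fun v => h (u, v))) => //.
exact: measurable_fun_pair2.
Qed.

Lemma leb2_invariant_ge0 (L : T2 -> T2) :
  (forall h : T2 -> \bar R, measurable_fun [set: T2] h -> (forall y, 0 <= h y) ->
     \int[lam2]_y h (L y) = \int[lam2]_y h y) ->
  leb2_invariant L.
Proof.
move=> hL h mh.
rewrite -[LHS]/(\int[lam2]_y (h \o L) y) integralE funepos_comp funeneg_comp.
rewrite (hL h^\+) ?(hL h^\-) -?integralE //.
- exact: measurable_funeneg.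
- exact: measurable_funepos.
Qed.

Lemma measurable_conv2_integrand (f g : T2 -> R) (x : T2) :
  measurable_fun [set: T2] f -> measurable_fun [set: T2] g ->
  measurable_fun [set: T2] (fun y => (f (x - y)%R * g y)%:E).
Proof.
move=> mf mg; apply/measurable_EFinP/measurable_funM => //.
apply: measurableT_comp mf _; apply: measurable_fun_pair.
  by apply: measurable_funB => //; exact: measurable_fst.
by apply: measurable_funB => //; exact: measurable_snd.
Qed.

Lemma conv2_invariant (L : T2 -> T2) (f g : T2 -> R) (x : T2) :
  leb2_invariant L -> {morph L : u v / (u - v)%R} ->
  measurable_fun [set: T2] f -> measurable_fun [set: T2] g ->
  (forall z, f (L z) = f z) -> (forall z, g (L z) = g z) ->
  conv2 f g (L x) = conv2 f g x.
Proof.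
move=> hL Lsub mf mg fL gL; rewrite /conv2 /Rintegral.
rewrite -(hL _ (measurable_conv2_integrand (L x) mf mg)).
by congr fine; apply: eq_integral => y _; rewrite -Lsub fL gL.
Qed.

End leb2_invariance.

Section square_reflection.
Variable R : realType.
Let M := measurableTypeR R.
Let T2 := (M * M)%type.

Definition square_reflection (L : R * R -> R * R) :=
  [\/ L = reflect1, L = reflect2 | L = swap_pair].

Lemma square_reflection_leb2_invariant L :
  square_reflection L -> leb2_invariant (L : T2 -> T2).
Proof.
move=> hL; apply: leb2_invariant_ge0; case: hL => ->.
- exact: ge0_leb2_integral_reflect1.
- exact: ge0_leb2_integral_reflect2.
- exact: ge0_leb2_integral_swap.
Qed.

Lemma square_reflection_morphB L :
  square_reflection L -> {morph L : u v / u - v}.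
Proof. by case=> -> u v; rewrite /reflect1 /reflect2 /swap_pair /= ?opprD. Qed.

Lemma measurable_gauss2 s : measurable_fun [set: T2] (gauss2 s).
Proof.
apply: measurable_funM => //; apply: measurableT_comp => //.
apply: measurable_funM => //; apply: measurable_funN.
by apply: measurable_funD; apply: measurable_funX;
  [exact: measurable_fst|exact: measurable_snd].
Qed.

Lemma measurable_Xsq a : measurable_fun [set: T2] (Xsq a).
Proof.
apply: measurable_fun_ifT => //; apply: measurable_and; apply: measurable_fun_ler => //.
  by apply: measurableT_comp => //; exact: measurable_fst.
by apply: measurableT_comp => //; exact: measurable_snd.
Qed.

Lemma gauss2_square_reflection s L z :
  square_reflection L -> gauss2 s (L z) = gauss2 s z.
Proof. by case=> ->; rewrite /gauss2 /= ?sqrrN // addrC. Qed.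

Lemma Xsq_square_reflection a L z :
  square_reflection L -> Xsq a (L z) = Xsq a z.
Proof. by case=> ->; rewrite /Xsq /= ?normrN // andbC. Qed.

Lemma conv2_gauss2_Xsq_square_reflection s a L z : square_reflection L ->
  conv2 (gauss2 s) (Xsq a) (L z) = conv2 (gauss2 s) (Xsq a) z.
Proof.
move=> hL; apply: conv2_invariant.
- exact: square_reflection_leb2_invariant.
- exact: square_reflection_morphB.
- exact: measurable_gauss2.
- exact: measurable_Xsq.
- by move=> y; exact: gauss2_square_reflection.
- by move=> y; exact: Xsq_square_reflection.
Qed.

Lemma grad2_square_reflection (F : R * R -> R) L x : square_reflection L ->
  (forall z, F (L z) = F z) -> grad2 F (L x) = L (grad2 F x).
Proof.
case=> -> FL; rewrite /grad2 /=.
- rewrite derive1_even => [|s]; last exact: FL (s, x.2).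
  by congr (_, _); congr derive1; apply/funext => t; exact: FL (x.1, t).
- rewrite derive1_even => [|t]; last exact: FL (x.1, t).
  by congr (_, _); congr derive1; apply/funext => s; exact: FL (s, x.2).
- by congr (_, _); congr derive1; apply/funext => u;
    [exact: FL (x.1, u)|exact: FL (u, x.2)].
Qed.

Lemma mxapp_mx2 a b c d (x : R * R) :
  mxapp (mx2 a b c d) x = (a * x.1 + b * x.2, c * x.1 + d * x.2).
Proof. by rewrite /mxapp /mx2 !mxE. Qed.

Lemma dot2_rot_square_reflection L (a b : R * R) : square_reflection L ->
  dot2 (L a) (mxapp (mx2 0 (-1) 1 0) (L b)) = - dot2 a (mxapp (mx2 0 (-1) 1 0) b).
Proof. by case=> ->; rewrite /dot2 !mxapp_mx2 /=; ring. Qed.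

Lemma Cfun_square_reflection alpha sigma L z : square_reflection L ->
  Cfun alpha sigma (L z) = - Cfun alpha sigma z.
Proof.
move=> hL; rewrite /Cfun (grad2_square_reflection _ hL) ?dot2_rot_square_reflection //.
by move=> y; exact: conv2_gauss2_Xsq_square_reflection.
Qed.

End square_reflection.

Theorem mainTheorem9 (R : realType) (alpha sigma : R) (Q : 'M[R]_2) :
  0 < alpha -> 0 < sigma ->
  (Q = mx2 1 0 0 (-1) \/ Q = mx2 (-1) 0 0 1 \/
   Q = mx2 0 1 1 0 \/ Q = mx2 0 (-1) (-1) 0) ->
  forall x : R * R, Cfun alpha sigma (mxapp Q x) = - Cfun alpha sigma x.
Proof.
move=> _ _ hQ x.
have [r1 r2 sw] : [/\ square_reflection (@reflect1 R R),
  square_reflection (@reflect2 R R) & square_reflection (@swap_pair R R)].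
  by split; constructor.
case: hQ => [|[|[|]]] ->; rewrite mxapp_mx2 !(mul0r, mul1r, mulN1r, addr0, add0r).
- exact: Cfun_square_reflection _ _ x r2.
- exact: Cfun_square_reflection _ _ x r1.
- exact: Cfun_square_reflection _ _ x sw.
- rewrite -[(_, _)]/(reflect1 (reflect2 (swap_pair x))).
  by rewrite !Cfun_square_reflection // opprK.
Qed.
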